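(* $\mathtt{normal}$-$\mathtt{pred}$-$\mathtt{ESO}$-$\mathtt{HORN}\subseteq\mathtt{RealTime_{OIA}}$: for every normalized predecessor Horn formula $\Phi$ there is a one-way iterative array $\mathcal A$ accepting in real time exactly the words $w\in\Sigma^+$ with $\langle w\rangle\models\Phi$.
   Context: Fix a finite alphabet $\Sigma$. A nonempty word $w=w_1\cdots w_n$ is represented by the structure $\langle w\rangle=([1,n];(Q_s)_{s\in\Sigma},\mathtt{min},\mathtt{max},\mathtt{suc},\mathtt{pred})$ with $Q_s(i)\iff w_i=s$, $\mathtt{min}(i)\iff i=1$, $\mathtt{max}(i)\iff i=n$, $\mathtt{suc}(i)=\min(i+1,n)$, $\mathtt{pred}(i)=\max(i-1,1)$; $x-1=\mathtt{pred}(x)$. A normalized predecessor Horn formula is $\Phi=\exists\mathbf{R}\forall x\forall y\,\psi(x,y)$, with $\mathbf{R}$ a finite set of binary relation symbols and $\psi$ a conjunction of clauses each of one of the forms: input clauses $\mathtt{min}(x)\wedge\mathtt{min}(y)\wedge Q_s(y)\to R(x,y)$ or $\mathtt{min}(x)\wedge\neg\mathtt{min}(y)\wedge Q_s(y)\to R(x,y)$ ($s\in\Sigma$, $R\in\mathbf{R}$); the contradiction clause $\mathtt{max}(x)\wedge\mathtt{max}(y)\wedge R_\bot(x,y)\to\bot$ for a fixed $R_\bot\in\mathbf{R}$; computation clauses $\delta_1\wedge\cdots\wedge\delta_r\to R(x,y)$ with $R\in\mathbf{R}$ and each $\delta_i$ a conjunction $S(x-1,y)\wedge\neg\mathtt{min}(x)$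 or $S(x,y-1)\wedge\neg\mathtt{min}(y)$, $S\in\mathbf{R}$. $\mathtt{normal}$-$\mathtt{pred}$-$\mathtt{ESO}$-$\mathtt{HORN}$ is the class of languages $\{w\in\Sigma^+:\langle w\rangle\models\Phi\}$ for such $\Phi$. A one-way iterative array (OIA) is a cellular automaton with finite state set $Q$, accepting states $Q_{accept}\subseteq Q$, neighborhood $\{-1,0\}$, transition function $\delta:Q^2\to Q$, and an input transition function $\delta_{input}$ for the first cell. On input $w=w_1\cdots w_n$ it uses cells $1,\dots,n$; cells outside are permanently in a state $\sharp$, cells not yet reached by information are in a quiescent state $\lambda$. Input is sequential: the letter $w_i$ is given to cell $1$ at time $i$ (the new state of cell 1 at time $i\le n$ is computed by $\delta_{input}$ from $w_i$ and the previous states); other cells are updated by $\langle c,t\rangle=\delta(\langle c-1,t-1\rangle,\langle c,t-1\rangle)$. The output cell is cell $n$, and $w$ is accepted in real time iff $\langle n,2n-1\rangle\in Q_{accept}$ (the first time at which cell $n$ has received information from all letters). $\mathtt{RealTime_{OIA}}$ is the class of languages so accepted. *)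

From mathcomp Require Import all_boot.
From Stdlib Require List.
Set Implicit Arguments. Unset Strict Implicit. Unset Printing Implicit Defensive.

(* letter w_i (1-indexed); Q_s(i) <-> wletter w i = Some s *)
Definition wletter (Sigma : eqType) (w : seq Sigma) (i : nat) : option Sigma :=
  onth w i.-1.
Definition Qs (Sigma : eqType) (w : seq Sigma) (s : Sigma) (i : nat) : Prop :=
  wletter w i = Some s.
Definition is_min (i : nat) : Prop := i = 1.
Definition is_max (n i : nat) : Prop := i = n.
(* pred(i) = max(i-1,1) ;  x - 1 := pred x *)
Definition wpred (i : nat) : nat := maxn (i - 1) 1.

(* atoms of computation clauses:
   ALeft S  : S(x-1,y) /\ ~min(x)
   ADown S  : S(x,y-1) /\ ~min(y) *)
Inductive atom (Rl : Type) := ALeft of Rl | ADown of Rl.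

Inductive clause (Sigma Rl : Type) :=
  | InMin of Sigma & Rl
  | InNotMin of Sigma & Rl
  | Contra
  | Comp of atom Rl & seq (atom Rl) & Rl.
      (* delta_1 /\ ... /\ delta_r -> R(x,y), r >= 1 (first atom, rest, head) *)

Record formula (Sigma : Type) := Formula {
  frel : finType;
  fRbot : frel;
  fclauses : seq (clause Sigma frel) }.

Section Sat.
Variables (Sigma : eqType) (w : seq Sigma) (Rl : Type) (Rbot : Rl)
          (I : Rl -> nat -> nat -> Prop).
Let n := size w.

Definition atom_holds (a : atom Rl) (x y : nat) : Prop :=
  match a with
  | ALeft Sr => I Sr (wpred x) y /\ ~ is_min x
  | ADown Sr => I Sr x (wpred y) /\ ~ is_min y
  end.

Definition clause_holds (c : clause Sigma Rl) (x y : nat) : Prop :=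
  match c with
  | InMin s R => is_min x /\ is_min y /\ Qs w s y -> I R x y
  | InNotMin s R => is_min x /\ ~ is_min y /\ Qs w s y -> I R x y
  | Contra => is_max n x /\ is_max n y /\ I Rbot x y -> False
  | Comp a l R => (atom_holds a x y /\ forall b, List.In b l -> atom_holds b x y)
                  -> I R x y
  end.
End Sat.

Definition models (Sigma : eqType) (w : seq Sigma) (Phi : formula Sigma) : Prop :=
  exists I : frel Phi -> nat -> nat -> Prop,
    forall x y, 1 <= x <= size w -> 1 <= y <= size w ->
      forall c, List.In c (fclauses Phi) -> clause_holds w (fRbot Phi) I c x y.

Unset Implicit Arguments.
Record OIA (Sigma : Type) := MkOIA {
  st : finType;
  acc : pred st;
  lam : st;
  sharp : st;
  delta : st -> st -> st;        (* delta(left neighbour, own state) *)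
  delta_in : Sigma -> st -> st -> st;
       (* input transition of cell 1: (letter, left neighbour (= #), own state) *)
  quiescent : delta lam lam = lam }.
Arguments st {Sigma} _. Arguments acc {Sigma} _. Arguments lam {Sigma} _. Arguments sharp {Sigma} _. Arguments delta {Sigma} _. Arguments delta_in {Sigma} _. Arguments quiescent {Sigma} _.
Set Implicit Arguments.

Section Run.
Variables (Sigma : eqType) (A : OIA Sigma) (w : seq Sigma).
(* conf t c = <c,t> for cells c >= 1; cell 0 is permanently # *)
Fixpoint conf (t : nat) : nat -> st A :=
  match t with
  | 0 => fun _ => lam A
  | t'.+1 => fun c =>
      if c == 0 then sharp A
      else if c == 1 then
        match onth w t' with       (* letter w_t is fed at time t <= n *)
        | Some a => delta_in A a (sharp A) (conf t' 1)
        | None => delta A (sharp A) (conf t' 1)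
        end
      else delta A (conf t' c.-1) (conf t' c)
  end.
End Run.

Definition rt_accepts (Sigma : eqType) (A : OIA Sigma) (w : seq Sigma) : bool :=
  acc A (conf A w (2 * size w - 1) (size w)).

From Pilot Require Import Defs.
From mathcomp Require Import all_boot zify.

Set Implicit Arguments.
Unset Strict Implicit.
Unset Printing Implicit Defensive.

(* The non-contradiction clauses of a normalized Horn formula are Horn clauses
   whose premises only look at the left neighbour (x-1,y) and the lower
   neighbour (x,y-1) of the point (x,y) they conclude about.  Hence they have a
   least model on [1,n]^2, obtained by a single sweep that computes at each
   point the finite set of relation symbols forced there from the sets at the
   two neighbours and, on the column x = 1, the letter w_y.  Every model
   contains this least model, so Phi holds iff R_bot is not forced at (n,n), or
   Phi has no contradiction clause.  A one-way iterative array evaluates the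
   sweep along anti-diagonals: cell x holds at time x+y-1 the set forced at
   (x,y), computed from its left neighbour, which holds the set at (x-1,y), and
   its own previous state, the set at (x,y-1); cell 1 reads w_y at time y.  At
   time 2n-1 cell n therefore holds the set forced at (n,n). *)

Lemma hasInP (T : Type) (p : pred T) (s : seq T) :
  reflect (exists2 c, List.In c s & p c) (has p s).
Proof.
elim: s => [|a s IH] /=; first by right; case.
apply: (iffP orP) => [[pa | /IH[c sc pc]] | [c [<- | sc] pc]].
- by exists a; [left |].
- by exists c; [right |].
- by left.
- by right; apply/IH; exists c.
Qed.

Lemma allInP (T : Type) (p : pred T) (s : seq T) :
  reflect (forall c, List.In c s -> p c) (all p s).
Proof.
elim: s => [|a s IH] /=; first by left.
apply: (iffP andP) => [[pa /IH ps] c [<- | /ps] // | ps].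
by split; [apply: ps; left | apply/IH => c sc; apply: ps; right].
Qed.

Lemma wpredSS k : wpred k.+2 = k.+1.
Proof. by rewrite /wpred; lia. Qed.

Section LeastModel.
Variables (Sigma : finType) (Phi : formula Sigma).
Local Notation R := (Defs.frel Phi).

(* At a point (x,y), [left] and [down] are the sets forced at (x-1,y) and
   (x,y-1), or [None] when x, resp. y, is minimal; [letter] is w_y when x is
   minimal and [None] otherwise. *)
Definition atom_ok (left down : option {set R}) (a : atom R) : bool :=
  match a with
  | ALeft Sr => if left is Some L then Sr \in L else false
  | ADown Sr => if down is Some D then Sr \in D else false
  end.

Definition clause_fires (letter : option Sigma) (left down : option {set R})
    (r : R) (c : clause Sigma R) : bool :=
  match c with
  | InMin s r' => [&& r' == r, left == None, letter == Some s & down == None]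
  | InNotMin s r' => [&& r' == r, left == None, letter == Some s & down != None]
  | Contra => false
  | Comp a l r' => [&& r' == r, atom_ok left down a & all (atom_ok left down) l]
  end.

Definition derive (letter : option Sigma) (left down : option {set R}) :
    {set R} :=
  [set r | has (clause_fires letter left down r) (fclauses Phi)].

(* [forced w x y] is the set of symbols forced at the point (x+1,y+1). *)
Fixpoint forced (w : seq Sigma) (x : nat) : nat -> {set R} :=
  fix column y :=
    derive (if x is 0 then onth w y else None)
           (if x is x'.+1 then Some (forced w x' y) else None)
           (if y is y'.+1 then Some (column y') else None).

Definition left_nb (w : seq Sigma) (x y : nat) : option {set R} :=
  if x is x'.+1 then Some (forced w x' y) else None.
Definition down_nb (w : seq Sigma) (x y : nat) : option {set R} :=
  if y is y'.+1 then Some (forced w x y') else None.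

Lemma forcedE w x y :
  forced w x y =
  derive (if x is 0 then onth w y else None) (left_nb w x y) (down_nb w x y).
Proof. by case: x; case: y. Qed.

Definition forced_rel (w : seq Sigma) (r : R) (x y : nat) : Prop :=
  r \in forced w x.-1 y.-1.

Lemma forced_relE w r x y : forced_rel w r x.+1 y.+1 = (r \in forced w x y).
Proof. by []. Qed.

Lemma atom_holds_forced w x y b :
  atom_holds (forced_rel w) b x.+1 y.+1 <->
  atom_ok (left_nb w x y) (down_nb w x y) b.
Proof.
case: b => Sr; [case: x => [|k] /= | case: y => [|k] /=];
  rewrite ?wpredSS; split=> [[_ min_ne] | ] //; case: (min_ne erefl).
Qed.

Lemma forced_clause_holds w x y c :
  List.In c (fclauses Phi) -> c <> Contra Sigma R ->
  clause_holds w (fRbot Phi) (forced_rel w) c x.+1 y.+1.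
Proof.
case: c => [s r | s r | | a l r] Phi_c // _ /=; rewrite forced_relE forcedE inE.
- case=> -[->] [[->]] ws; apply/hasInP; exists (InMin s r) => //=.
  by move: ws; rewrite /Qs /wletter /= => ->; rewrite !eqxx.
- case: y => [|y] [[->]] [y_ne ws]; first by case: y_ne.
  apply/hasInP; exists (InNotMin s r) => //=.
  by move: ws; rewrite /Qs /wletter /= => ->; rewrite !eqxx.
- case=> a_ok l_ok; apply/hasInP; exists (Comp _ a l r) => //=.
  rewrite eqxx (atom_holds_forced _ _ _ _).1 //=.
  by apply/allInP => b /l_ok /atom_holds_forced.
Qed.

Section Minimality.
Variables (w : seq Sigma) (I : R -> nat -> nat -> Prop).
Hypothesis I_model : forall x y, 1 <= x <= size w -> 1 <= y <= size w ->
  forall c, List.In c (fclauses Phi) -> clause_holds w (fRbot Phi) I c x y.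

Lemma derive_sub_model x y r : x < size w -> y < size w ->
  (forall b, atom_holds (forced_rel w) b x.+1 y.+1 -> atom_holds I b x.+1 y.+1) ->
  r \in forced w x y -> I r x.+1 y.+1.
Proof.
move=> xn yn nb_sub; rewrite forcedE inE => /hasInP[c Phi_c].
have := @I_model x.+1 y.+1 xn yn _ Phi_c.
case: c {Phi_c} => [s r' | s r' | | a l r'] //=.
- case: x {xn nb_sub} => [|x] I_c /and4P[/eqP <- // _ /eqP ws /eqP y0].
  by case: y y0 {yn} I_c ws => // _ I_c ws; apply: I_c.
- case: x {xn nb_sub} => [|x] I_c /and4P[/eqP <- // _ /eqP ws].
  by case: y {yn} I_c ws => // y I_c ws _; apply: I_c.
- move=> I_c /and3P[/eqP <- a_ok /allInP l_ok].
  have ok_holds b :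
    atom_ok (left_nb w x y) (down_nb w x y) b -> atom_holds I b x.+1 y.+1.
    by move/atom_holds_forced/nb_sub.
  by apply: I_c; split=> [|b /l_ok]; exact: ok_holds.
Qed.

Lemma forced_sub_model x y r : x < size w -> y < size w ->
  r \in forced w x y -> I r x.+1 y.+1.
Proof.
elim: x y r => [|x IHx] y; elim: y => [|y IHy] r xn yn;
  apply: derive_sub_model => // -[] Sr /atom_holds_forced //= Sr_in;
  rewrite wpredSS; split=> //;
  by [apply: IHx => //; lia | apply: IHy => //; lia].
Qed.
End Minimality.

Definition has_contra : bool :=
  has (fun c => if c is Contra then true else false) (fclauses Phi).

Lemma models_forcedE w : 0 < size w ->
  models w Phi <->
  has_contra ==> (fRbot Phi \notin forced w (size w).-1 (size w).-1).
Proof.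
case wn: (size w) => [|m] // _; split.
- case=> I I_model; apply/implyP => /hasInP[[] // Phi_c _].
  apply/negP => Rbot_in.
  have := @I_model m.+1 m.+1 _ _ _ Phi_c.
  rewrite wn /= => /(_ (leqnn _) (leqnn _)).
  by apply; do 2!split=> //; apply: (forced_sub_model I_model); rewrite ?wn.
- move=> consistent; exists (forced_rel w) => x y.
  case: x => // x _; case: y => // y _ c Phi_c.
  case: c Phi_c => [s r | s r | | a l r] Phi_c; try exact: forced_clause_holds.
  rewrite /= /is_max wn => -[[->]] [[->]] Rbot_in.
  have contra : has_contra by apply/hasInP; exists (Contra Sigma R).
  by move/implyP/(_ contra)/negP: consistent.
Qed.

(* [None] is the quiescent state, [Some None] the border state, and
   [Some (Some D)] a cell that holds the forced set [D]. *)
Definition oia_state : finType := option (option {set R}).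

Definition cell_set (q : oia_state) : option {set R} :=
  if q is Some (Some D) then Some D else None.

Definition oia_delta (l q : oia_state) : oia_state :=
  if l is Some (Some L) then Some (Some (derive None (Some L) (cell_set q))) else q.

Definition oia_input (a : Sigma) (_ q : oia_state) : oia_state :=
  Some (Some (derive (Some a) None (cell_set q))).

Definition oia_accept (q : oia_state) : bool :=
  if q is Some (Some M) then has_contra ==> (fRbot Phi \notin M) else true.

Definition forced_oia : OIA Sigma :=
  MkOIA Sigma oia_state oia_accept None (Some None) oia_delta oia_input erefl.

Lemma conf_quiescent w t c : t < c -> conf forced_oia w t c = None.
Proof.
elim: t c => [|t IH] [|[|c]] //= tc.
by rewrite !IH // ltnW.
Qed.

Lemma conf_first_cellS w t :
  conf forced_oia w t.+1 1 =
  if onth w t is Some a then oia_input a (Some None) (conf forced_oia w t 1)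
  else conf forced_oia w t 1.
Proof. by rewrite /=; case: onth. Qed.

Lemma conf_first_cell w y :
  y < size w -> conf forced_oia w y.+1 1 = Some (Some (forced w 0 y)).
Proof.
elim: y => [|y IH] yn; first by case: w yn.
rewrite conf_first_cellS IH ?[forced w 0 y.+1]forcedE; last exact: ltnW.
by case: onth (onthTE w y.+1) => [a|]; rewrite yn.
Qed.

Lemma conf_cellSS w t c :
  conf forced_oia w t.+1 c.+2 =
  oia_delta (conf forced_oia w t c.+1) (conf forced_oia w t c.+2).
Proof. by []. Qed.

Lemma conf_forced w x y :
  y < size w -> conf forced_oia w (x + y).+1 x.+1 = Some (Some (forced w x y)).
Proof.
elim: x y => [|x IHx] y; first exact: conf_first_cell.
elim: y => [|y IHy] yn; rewrite addSn conf_cellSS IHx //.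
  by rewrite conf_quiescent ?addn0.
by rewrite addnS -addSn IHy // ltnW.
Qed.

Lemma rt_accepts_forcedE w : 0 < size w ->
  rt_accepts forced_oia w =
  has_contra ==> (fRbot Phi \notin forced w (size w).-1 (size w).-1).
Proof.
rewrite /rt_accepts; case wn: (size w) => [|m] // _.
have -> : 2 * m.+1 - 1 = (m + m).+1 by lia.
by rewrite conf_forced // wn.
Qed.

End LeastModel.

Theorem lemma4 (Sigma : finType) (Phi : formula Sigma) :
  exists A : OIA Sigma,
    forall w : seq Sigma, 0 < size w -> (rt_accepts A w <-> models w Phi).
Proof.
exists (forced_oia Phi) => w w_ne.
by rewrite rt_accepts_forcedE //; apply: iff_sym; apply: models_forcedE.
Qed.
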